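(* Let $P,Q\in\mathbb{H}[q_1,q_2]$. If ${\rm Res}(P,Q;q_1)\equiv0$, then ${\rm Res}(P^s,Q^s;q_1)\equiv0$; if ${\rm Res}(P,Q;q_2)\equiv0$, then ${\rm Res}(P^s,Q^s;q_2)\equiv0$.
   Context: $\mathbb{H}$ denotes the quaternions. A slice regular polynomial in two quaternionic variables is a function $\mathbb{H}^2\to\mathbb{H}$ of the form $P(q_1,q_2)=\sum_{n=0}^{N}\sum_{m=0}^{M}q_1^nq_2^ma_{n,m}$ with $a_{n,m}\in\mathbb{H}$ (coefficients on the right); $\deg_{q_1}P$, $\deg_{q_2}P$ are the degrees in $q_1$, $q_2$. The set of these is $\mathbb{H}[q_1,q_2]$, and $\mathbb{H}[q]$ denotes the analogous one-variable polynomials $\sum q^na_n$. The $*$-product is defined by $\big(\sum q_1^nq_2^ma_{n,m}\big)*\big(\sum q_1^nq_2^mb_{n,m}\big)=\sum_{n,m}q_1^nq_2^m\sum_{r\le n,s\le m}a_{r,s}b_{n-r,m-s}$ (and analogously in one variable). The regular conjugate of $P=\sum q_1^nq_2^ma_{n,m}$ is $P^c=\sum q_1^nq_2^m\overline{a_{n,m}}$ and its symmetrization is $P^s=P*P^c=P^c*P$ (which has real coefficients). $(\mathbb{H}[q],+,* )$ is a left and right Ore domain and we let $\mathcal{L}$ be its skew field of quotients. Every $P\in\mathbb{H}[q_1,q_2]$ can be written as $P=\sum_{k=0}^{n}q_1^kP_k(q_2)$ with $P_k\in\mathbb{H}[q_2]$, and as $P=\sum_{k=0}^{r}q_2^k*\tilde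 P_k(q_1)$ with $\tilde P_k\in\mathbb{H}[q_1]$. Dieudonné determinant: for a skew field $(\mathbb F,+,\star)$, let $\overline{\mathbb F}^\star$ be the abelianization of its multiplicative group; ${\rm Det}^\star_N$ is the unique homomorphism $GL(N,\mathbb F)\to\overline{\mathbb F}^\star$ sending ${\rm diag}(\lambda_1,\dots,\lambda_N)$ to the class of $\lambda_1\star\cdots\star\lambda_N$, extended by the value $[0]$ on non-invertible matrices. Here ${\rm Det}^*_N$ is this determinant over $\mathcal L$; for a matrix with entries in $\mathbb{H}[q]$ its value has a slice regular polynomial representative, unique up to commutators, with which it is identified. Regular resultants: let $P=\sum_{k=0}^nq_1^kP_k(q_2)$, $Q=\sum_{k=0}^mq_1^kQ_k(q_2)$. The Sylvester matrix $A(q_2)$ is the $(n+m)\times(n+m)$ matrix whose $j$-th column ($1\le j\le m$) has entries $P_0,\dots,P_n$ in rows $j,\dots,j+n$ and zeros elsewhere, and whose $(m+j)$-th column ($1\le j\le n$) has entries $Q_0,\dots,Q_m$ in rows $j,\dots,j+m$ and zeros elsewhere; ${\rm Res}(P,Q;q_1):={\rm Det}^*_{n+m}(A(q_2))$. Likewise, with $P=\sum_{k=0}^rq_2^k*\tilde P_k(q_1)$, $Q=\sum_{k=0}^sq_2^k*\tilde Q_k(q_1)$, $B(q_1)$ is the $(r+s)\times(r+s)$ matrix built in the same way from $\tilde P_0,\dots,\tilde P_r$ (first $s$ columns) and $\tilde Q_0,\dots,\tilde Q_s$ (last $r$ columns), and ${\rm Res}(P,Q;q_2):={\rm Det}^*_{r+s}(B(q_1))$.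 ''${\rm Res}\equiv0$'' means it is the zero polynomial (zero class). *)

From HB Require Import structures.
From mathcomp Require Import all_boot all_order all_algebra.
From mathcomp Require Import ring.
From mathcomp Require Import reals.
Set Implicit Arguments. Unset Strict Implicit. Unset Printing Implicit Defensive.
Import Order.TTheory GRing.Theory Num.Theory.
Local Open Scope ring_scope.

(* Quaternion algebra (-1,-1) over a commutative ring K:               *)
(*   x = qr x + qi x i + qj x j + qk x k,  i^2=j^2=k^2=ijk=-1.          *)
Record quat (K : Type) := Quat { qr : K; qi : K; qj : K; qk : K }.

Definition quat_to (K : Type) (x : quat K) := (qr x, qi x, qj x, qk x).
Definition quat_of (K : Type) (t : K * K * K * K) :=
  let: (a, b, c, d) := t in Quat a b c d.
Lemma quat_toK (K : Type) : cancel (@quat_to K) (@quat_of K).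
Proof. by case. Qed.

HB.instance Definition _ (K : eqType) := Equality.copy (quat K) (can_type (@quat_toK K)).
HB.instance Definition _ (K : choiceType) := Choice.copy (quat K) (can_type (@quat_toK K)).

Definition qzero (K : comNzRingType) : quat K := Quat 0 0 0 0.
Definition qone (K : comNzRingType) : quat K := Quat 1 0 0 0.
Definition qadd (K : comNzRingType) (x y : quat K) : quat K :=
  Quat (qr x + qr y) (qi x + qi y) (qj x + qj y) (qk x + qk y).
Definition qopp (K : comNzRingType) (x : quat K) : quat K :=
  Quat (- qr x) (- qi x) (- qj x) (- qk x).
Definition qmul (K : comNzRingType) (x y : quat K) : quat K :=
  Quat (qr x * qr y - qi x * qi y - qj x * qj y - qk x * qk y)
       (qr x * qi y + qi x * qr y + qj x * qk y - qk x * qj y)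
       (qr x * qj y - qi x * qk y + qj x * qr y + qk x * qi y)
       (qr x * qk y + qi x * qj y - qj x * qi y + qk x * qr y).
Definition qconj (K : comNzRingType) (x : quat K) : quat K :=
  Quat (qr x) (- qi x) (- qj x) (- qk x).

Lemma qaddA (K : comNzRingType) : associative (@qadd K).
Proof. by move=> [? ? ? ?] [? ? ? ?] [? ? ? ?]; rewrite /qadd /=; congr Quat; ring. Qed.
Lemma qaddC (K : comNzRingType) : commutative (@qadd K).
Proof. by move=> [? ? ? ?] [? ? ? ?]; rewrite /qadd /=; congr Quat; ring. Qed.
Lemma qadd0 (K : comNzRingType) : left_id (@qzero K) (@qadd K).
Proof. by move=> [? ? ? ?]; rewrite /qadd /=; congr Quat; ring. Qed.
Lemma qaddN (K : comNzRingType) : left_inverse (@qzero K) (@qopp K) (@qadd K).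
Proof. by move=> [? ? ? ?]; rewrite /qadd /=; congr Quat; ring. Qed.

HB.instance Definition _ (K : comNzRingType) :=
  GRing.isZmodule.Build (quat K) (@qaddA K) (@qaddC K) (@qadd0 K) (@qaddN K).

Lemma qmulA (K : comNzRingType) : associative (@qmul K).
Proof. by move=> [? ? ? ?] [? ? ? ?] [? ? ? ?]; rewrite /qone /qmul /=; congr Quat; ring. Qed.
Lemma qmul1 (K : comNzRingType) : left_id (@qone K) (@qmul K).
Proof. by move=> [? ? ? ?]; rewrite /qone /qmul /=; congr Quat; ring. Qed.
Lemma qmulr1 (K : comNzRingType) : right_id (@qone K) (@qmul K).
Proof. by move=> [? ? ? ?]; rewrite /qone /qmul /=; congr Quat; ring. Qed.
Lemma qmulDl (K : comNzRingType) : left_distributive (@qmul K) (@qadd K).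
Proof. by move=> [? ? ? ?] [? ? ? ?] [? ? ? ?]; rewrite /qmul /= /qadd /=; congr Quat; ring. Qed.
Lemma qmulDr (K : comNzRingType) : right_distributive (@qmul K) (@qadd K).
Proof. by move=> [? ? ? ?] [? ? ? ?] [? ? ? ?]; rewrite /qmul /= /qadd /=; congr Quat; ring. Qed.
Lemma qone_neq0 (K : comNzRingType) : @qone K != 0.
Proof. by apply/eqP => -[] /eqP; rewrite oner_eq0. Qed.

HB.instance Definition _ (K : comNzRingType) :=
  GRing.Zmodule_isNzRing.Build (quat K) (@qmulA K) (@qmul1 K) (@qmulr1 K)
    (@qmulDl K) (@qmulDr K) (@qone_neq0 K).

Notation HH R := (quat (R : realType)).

(* H[q] : slice regular polynomials in one variable, with the *-product.
   Since coefficients are on the right and the *-product is the Cauchy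
   product a_r b_{n-r}, H[q] with + and the star-product is exactly MathComp's {poly H}.      *)
Notation Hpoly R := {poly HH R}.

(* H[q1,q2] : P = \sum_k q1^k P_k(q2), i.e. a polynomial in q1 whose
   coefficients P_k are in H[q2].  The *-product of {poly {poly H}} is
   \sum_{r<=n,s<=m} a_{r,s} b_{n-r,m-s}, as in the paper.              *)
Notation Hpoly2 R := {poly {poly HH R}}.

Definition reg_conj (R : realType) (P : Hpoly2 R) : Hpoly2 R :=
  map_poly (map_poly (@qconj R)) P.
Definition symmetrization (R : realType) (P : Hpoly2 R) : Hpoly2 R :=
  P * reg_conj P.

(* Exchange of the roles of q1 and q2: the coefficient of q1^n q2^m in
   P becomes the coefficient of q1^m q2^n.  Hence if
   P = \sum_k q2^k * tildeP_k(q1), then (swap12 P)`_k = tildeP_k.       *)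
Definition swap12 (R : realType) (P : Hpoly2 R) : Hpoly2 R :=
  \poly_(i < (\max_(j < size P) size (P`_j)%R)%N) \poly_(j < size P) (P`_j)`_i.

(* Sylvester matrix of p = \sum_k X^k p_k, q = \sum_k X^k q_k (degrees
   n = (size p).-1, m = (size q).-1); 0-indexed: column j < m carries
   p_0..p_n in rows j..j+n, column m+j (j < n) carries q_0..q_m in rows
   j..j+m.                                                            *)
Definition sylvester (S : nzRingType) (p q : {poly S}) :
    'M[S]_((size q).-1 + (size p).-1) :=
  let n := (size p).-1 in let m := (size q).-1 in
  \matrix_(i, j)
    if (j < m)%N then
      (if (j <= i <= j + n)%N then p`_(i - j) else 0)
    else
      (if (j - m <= i <= j - m + m)%N then q`_(i - (j - m)) else 0).

(* The skew field of quotients L of H[q].  Since every non-zero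
   f in H[q] satisfies f * f^c = f^s in R[q]\{0} (central), L is the
   quaternion algebra over the rational function field R(q):
   L = quat {fraction {poly R}}, and H[q] embeds coefficientwise.      *)
Definition Lfield (R : realType) := quat {fraction {poly R}}.

Definition embL (R : realType) (p : Hpoly R) : Lfield R :=
  Quat (tofrac (map_poly (@qr R) p)) (tofrac (map_poly (@qi R) p))
       (tofrac (map_poly (@qj R) p)) (tofrac (map_poly (@qk R) p)).

Definition invertible_over (S : nzRingType) (N : nat) (M : 'M[S]_N) : Prop :=
  exists B : 'M[S]_N, M *m B = 1%:M /\ B *m M = 1%:M.

(* Det^*_N(A) = [0]  <->  A is not invertible over L (on GL(N,L) the
   Dieudonne determinant takes values in the abelianized group of
   non-zero elements, and it is [0] exactly on non-invertible matrices). *)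
Definition Dieudonne_det_zero (R : realType) (N : nat) (A : 'M[Hpoly R]_N) : Prop :=
  ~ invertible_over (map_mx (@embL R) A).

Definition res_q1_zero (R : realType) (P Q : Hpoly2 R) : Prop :=
  Dieudonne_det_zero (sylvester P Q).

Definition res_q2_zero (R : realType) (P Q : Hpoly2 R) : Prop :=
  Dieudonne_det_zero (sylvester (swap12 P) (swap12 Q)).

(* Let p, q in L[q1] be P, Q with their coefficients embedded in the skew field
   L = quat R(q2) of quotients of H[q2].  By Gaussian elimination over a division
   ring, the Sylvester matrix of p, q is singular iff p * A + q * B = 0 for some
   nonzero pair (A, B) with deg A < deg q and deg B < deg p.  The coefficients of
   A * A^c are fixed by conjugation, hence real, so A * A^c is central and
   p^s * A^s = (p * A) * (p * A)^c; likewise q^s * B^s = (q * B) * (q * B)^c, and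
   q * B = - p * A.  Hence p^s * A^s - q^s * B^s = 0, and since the quaternion
   norm is anisotropic over R(q2), (A^s, - B^s) is a nonzero pair of the degrees
   required by the Sylvester matrix of p^s, q^s.  Exchanging q1 and q2 commutes
   with symmetrization, which gives the statement for q2. *)

From HB Require Import structures.
From mathcomp Require Import all_boot all_order all_algebra perm reals.
From mathcomp Require Import generic_quotient ring zify.
Set Implicit Arguments. Unset Strict Implicit. Unset Printing Implicit Defensive.
Import Order.TTheory GRing.Theory Num.Theory.
Local Open Scope ring_scope.

(** * Quaternions over a commutative ring *)

Section QuatRing.
Variable K : comNzRingType.
Implicit Types (x y : quat K) (a : K).

Lemma quat_ext x y :
  qr x = qr y -> qi x = qi y -> qj x = qj y -> qk x = qk y -> x = y.
Proof. by case: x y => [? ? ? ?] [? ? ? ?] /= -> -> -> ->. Qed.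

Lemma qconj_is_zmod_morphism : zmod_morphism (@qconj K).
Proof. by move=> x y; apply: quat_ext => /=; ring. Qed.
HB.instance Definition _ :=
  GRing.isZmodMorphism.Build (quat K) (quat K) (@qconj K) qconj_is_zmod_morphism.

Lemma qconjK : involutive (@qconj K).
Proof. by move=> x; apply: quat_ext => /=; ring. Qed.

Lemma qconjM x y : qconj (x * y) = qconj y * qconj x.
Proof. by apply: quat_ext => /=; ring. Qed.

Definition qsc a : quat K := Quat a 0 0 0.

Lemma qscM a b : qsc (a * b) = qsc a * qsc b.
Proof. by apply: quat_ext => /=; ring. Qed.

Lemma qsc_comm a x : GRing.comm (qsc a) x.
Proof. by apply: quat_ext => /=; ring. Qed.

Definition qnorm x := qr x ^+ 2 + qi x ^+ 2 + qj x ^+ 2 + qk x ^+ 2.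

Lemma qmul_conj x : x * qconj x = qsc (qnorm x).
Proof. by apply: quat_ext => /=; rewrite /qnorm; ring. Qed.

Lemma qconj_mul x : qconj x * x = qsc (qnorm x).
Proof. by apply: quat_ext => /=; rewrite /qnorm; ring. Qed.

Lemma qnormM x y : qnorm (x * y) = qnorm x * qnorm y.
Proof. by rewrite /qnorm /=; ring. Qed.

Lemma qr_is_zmod_morphism : zmod_morphism (@qr K). Proof. by []. Qed.
Lemma qi_is_zmod_morphism : zmod_morphism (@qi K). Proof. by []. Qed.
Lemma qj_is_zmod_morphism : zmod_morphism (@qj K). Proof. by []. Qed.
Lemma qk_is_zmod_morphism : zmod_morphism (@qk K). Proof. by []. Qed.
End QuatRing.

HB.instance Definition _ (K : comNzRingType) :=
  GRing.isZmodMorphism.Build (quat K) K (@qr K) (@qr_is_zmod_morphism K).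
HB.instance Definition _ (K : comNzRingType) :=
  GRing.isZmodMorphism.Build (quat K) K (@qi K) (@qi_is_zmod_morphism K).
HB.instance Definition _ (K : comNzRingType) :=
  GRing.isZmodMorphism.Build (quat K) K (@qj K) (@qj_is_zmod_morphism K).
HB.instance Definition _ (K : comNzRingType) :=
  GRing.isZmodMorphism.Build (quat K) K (@qk K) (@qk_is_zmod_morphism K).

Section QuatMap.
Variables (K1 K2 : comNzRingType) (f : {rmorphism K1 -> K2}).
Implicit Types x y : quat K1.

Definition qmap (g : K1 -> K2) x : quat K2 :=
  Quat (g (qr x)) (g (qi x)) (g (qj x)) (g (qk x)).

Lemma qmapM x y : qmap f (x * y) = qmap f x * qmap f y.
Proof. by apply: quat_ext; rewrite /= !(rmorphB, rmorphD, rmorphM). Qed.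

Lemma qmap_conj x : qmap f (qconj x) = qconj (qmap f x).
Proof. by apply: quat_ext; rewrite /= ?raddfN. Qed.

Lemma qnorm_map x : qnorm (qmap f x) = f (qnorm x).
Proof. by rewrite /qnorm /= !rmorphD !rmorphXn. Qed.
End QuatMap.

Section QuatUnitRing.
Variable K : comUnitRingType.
Implicit Types x y : quat K.

Definition qunit : pred (quat K) := fun x => qnorm x \is a GRing.unit.
Definition qinv x := if qunit x then qconj x * qsc (qnorm x)^-1 else x.

Lemma qmulVr : {in qunit, left_inverse 1 qinv *%R}.
Proof.
move=> x ux; rewrite /qinv ifT // -mulrA qsc_comm mulrA qconj_mul -qscM.
by rewrite mulrV.
Qed.

Lemma qmulrV : {in qunit, right_inverse 1 qinv *%R}.
Proof. by move=> x ux; rewrite /qinv ifT // mulrA qmul_conj -qscM mulrV. Qed.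

Lemma qunitP x y : y * x = 1 /\ x * y = 1 -> qunit x.
Proof.
move=> [yx1 _]; apply/unitrP; exists (qnorm y).
have n1 : qnorm y * qnorm x = 1 by rewrite -qnormM yx1 /qnorm /=; ring.
by split; last rewrite mulrC.
Qed.

Lemma qinv_out : {in [predC qunit], qinv =1 id}.
Proof. by move=> x nux; rewrite /qinv ifF //; exact: negbTE. Qed.

HB.instance Definition _ :=
  GRing.NzRing_hasMulInverse.Build (quat K) qmulVr qmulrV qunitP qinv_out.

Lemma qunitE x : (x \is a GRing.unit) = (qnorm x \is a GRing.unit).
Proof. by []. Qed.
End QuatUnitRing.

(** * Anisotropy of the norm *)

Definition anisotropic (K : comNzRingType) := forall x : quat K, qnorm x = 0 -> x = 0.

Lemma mul_qconj_eq0 (K : comNzRingType) (x : quat K) :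
  anisotropic K -> x * qconj x = 0 -> x = 0.
Proof. by move=> anK; rewrite qmul_conj => /(congr1 (@qr K)) /anK. Qed.

Lemma anisotropic_qunit (K : fieldType) (x : quat K) :
  anisotropic K -> x != 0 -> x \is a GRing.unit.
Proof.
move=> anK; rewrite qunitE unitfE; by apply: contraNneq => /anK ->; rewrite eqxx.
Qed.

Lemma anisotropic_real (R : realDomainType) : anisotropic R.
Proof.
case=> a b c d /eqP; rewrite /qnorm /= !paddr_eq0 ?addr_ge0 ?sqr_ge0 // !sqrf_eq0.
by move=> /andP[/andP[/andP[/eqP-> /eqP->] /eqP->] /eqP->].
Qed.

Lemma poly_eq0_horner (R : numDomainType) (p : {poly R}) :
  (forall t, p.[t] = 0) -> p = 0.
Proof.
move=> p0; apply: (@roots_geq_poly_eq0 _ p [seq i%:R | i <- iota 0 (size p)]).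
- by apply/allP => _ /mapP[i _ ->]; apply/eqP/p0.
- by rewrite map_inj_uniq ?iota_uniq // => i j /eqP; rewrite eqr_nat => /eqP.
- by rewrite size_map size_iota.
Qed.

Lemma anisotropic_poly (R : realDomainType) : anisotropic {poly R}.
Proof.
move=> x nx0.
have ev0 t : qmap (horner_eval t) x = 0.
  by apply: anisotropic_real; rewrite qnorm_map nx0 rmorph0.
by apply: quat_ext; apply: poly_eq0_horner => t; case: (congr1 (@quat_to _) (ev0 t)).
Qed.

Section FracClearDenom.
Local Open Scope quotient_scope.

Lemma frac_clear_denom (A : idomainType) (x : {fraction A}) :
  exists2 d : A, d != 0 & exists n, x * tofrac d = tofrac n.
Proof.
elim/quotW: x => r; exists (\d_r); first exact: denom_ratioP.
exists (\n_r); rewrite /FracField.tofrac; unlock.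
change (FracField.mul (\pi_(FracField.type A) r)
  (\pi_(FracField.type A) (Ratio \d_r 1)) = \pi_(FracField.type A) (Ratio \n_r 1)).
rewrite -FracField.pi_mul; apply/eqmodP.
rewrite /= FracField.equivfE /FracField.mulf.
by rewrite !numden_Ratio ?mulf_neq0 ?oner_neq0 ?denom_ratioP // !mulr1 mulrC.
Qed.
End FracClearDenom.

Lemma anisotropic_frac (A : idomainType) : anisotropic A -> anisotropic {fraction A}.
Proof.
move=> anA x nx0.
have [da da0 [na ea]] := frac_clear_denom (qr x).
have [db db0 [nb eb]] := frac_clear_denom (qi x).
have [dc dc0 [nc ec]] := frac_clear_denom (qj x).
have [dd dd0 [nd ed]] := frac_clear_denom (qk x).
pose D := tofrac (da * db * dc * dd).
pose y := Quat (na * (db * dc * dd)) (nb * (da * dc * dd))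
               (nc * (da * db * dd)) (nd * (da * db * dc)).
have xD : x * qsc D = qmap (@tofrac A) y.
  by apply: quat_ext; rewrite /= !rmorphM /= -?ea -?eb -?ec -?ed; ring.
have D_unit : qsc D \is a GRing.unit.
  rewrite qunitE unitfE /qnorm /= expr0n /= !addr0 sqrf_eq0 tofrac_eq0.
  by rewrite !mulf_neq0.
have y0 : y = 0.
  apply: anA; apply/eqP; rewrite -tofrac_eq0 -qnorm_map -xD qnormM nx0 mul0r.
  exact: eqxx.
by apply: (mulIr D_unit); rewrite xD y0 mul0r.
Qed.

Section MulMapConj.
Variables (S : nzRingType) (c : S -> S).
Hypotheses (c0 : c 0 = 0) (c_aniso : forall x, x * c x = 0 -> x = 0).

Lemma size_mul_map_conj (p : {poly S}) :
  size (p * map_poly c p) = (size p + size p).-1.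
Proof.
have [->|p0] := eqVneq p 0; first by rewrite mul0r size_poly0.
have lc_neq0 : lead_coef p * c (lead_coef p) != 0.
  by apply: contra_neq p0 => /c_aniso /eqP; rewrite lead_coef_eq0 => /eqP.
have c_lc : c (lead_coef p) != 0 by apply: contraNneq lc_neq0 => ->; rewrite mulr0.
by rewrite size_proper_mul ?size_map_poly_id0 // lead_coef_map_id0.
Qed.

Lemma mul_map_conj_eq0 (p : {poly S}) : p * map_poly c p = 0 -> p = 0.
Proof.
move=> /eqP; rewrite -size_poly_eq0 size_mul_map_conj => sp0.
by apply/eqP; rewrite -size_poly_eq0; move: sp0; case: (size p) => // n; rewrite addSn addnS.
Qed.
End MulMapConj.

Section QuatPoly.
Variable K : idomainType.
Hypothesis two_neq0 : 2%:R != 0 :> K.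
Local Notation pconj := (map_poly (@qconj K)).
Implicit Types p q A B : {poly quat K}.

Lemma pconjM p q : pconj (p * q) = pconj q * pconj p.
Proof.
apply/polyP => i; rewrite coef_map coefM coefMr raddf_sum.
by apply: eq_bigr => j _; rewrite !coef_map /= qconjM.
Qed.

Lemma pconjK : involutive pconj.
Proof. by move=> p; apply/polyP => i; rewrite !coef_map /= qconjK. Qed.

Lemma qconj_fixed (x : quat K) : qconj x = x -> x = qsc (qr x).
Proof.
have opp_fixed (a : K) : - a = a -> a = 0.
  move=> Na; apply/eqP; have : a *+ 2 == 0 by rewrite mulr2n -{1}Na addNr.
  by rewrite -mulr_natl mulf_eq0 (negPf two_neq0).
by case: x => a b c d [/opp_fixed-> /opp_fixed-> /opp_fixed->].
Qed.

Lemma mul_pconj_comm A p : GRing.comm (A * pconj A) p.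
Proof.
have fixedA : pconj (A * pconj A) = A * pconj A by rewrite pconjM pconjK.
apply/polyP => i; rewrite coefM coefMr; apply: eq_bigr => j _.
rewrite [(A * pconj A)`_j]qconj_fixed ?qsc_comm //.
by rewrite -coef_map fixedA.
Qed.

Lemma relation_symmetrization p q A B : p * A + q * B = 0 ->
  p * pconj p * (A * pconj A) + q * pconj q * - (B * pconj B) = 0.
Proof.
move=> /eqP; rewrite addr_eq0 => /eqP qB.
have symm_mul r C : r * pconj r * (C * pconj C) = r * C * pconj (r * C).
  by rewrite pconjM -mulrA -mul_pconj_comm !mulrA.
by rewrite mulrN !symm_mul qB raddfN mulrNN subrr.
Qed.
End QuatPoly.

(** * Square matrices over a division ring *)

Section InvertibleMatrix.
Variable D : nzRingType.

Definition nontrivial_kernel N (M : 'M[D]_N) :=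
  exists2 v : 'cV[D]_N, v != 0 & M *m v = 0.

Definition invertible_or_kernel N (M : 'M[D]_N) :=
  invertible_over M \/ nontrivial_kernel M.

Lemma kernel_not_invertible N (M : 'M[D]_N) :
  nontrivial_kernel M -> ~ invertible_over M.
Proof.
case=> v /eqP v_neq0 Mv [B [_ BM]]; apply: v_neq0.
by rewrite -[v]mul1mx -BM -mulmxA Mv mulmx0.
Qed.

Lemma invertible_mulmx N (A B : 'M[D]_N) :
  invertible_over A -> invertible_over B -> invertible_over (A *m B).
Proof.
move=> [A' [AA' A'A]] [B' [BB' B'B]]; exists (B' *m A'); split.
  by rewrite mulmxA -(mulmxA A) BB' mulmx1 AA'.
by rewrite mulmxA -(mulmxA B') A'A mulmx1 B'B.
Qed.

Lemma invertible_or_kernel_mull N (T M : 'M[D]_N) :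
  invertible_over T -> invertible_or_kernel M -> invertible_or_kernel (T *m M).
Proof.
move=> invT [invM | [v v_neq0 Mv]]; first by left; apply: invertible_mulmx.
by right; exists v; rewrite // -mulmxA Mv mulmx0.
Qed.

Lemma invertible_or_kernel_mulr N (M U : 'M[D]_N) :
  invertible_over U -> invertible_or_kernel M -> invertible_or_kernel (M *m U).
Proof.
move=> invU [invM | [v v_neq0 Mv]]; first by left; apply: invertible_mulmx.
have [U' [UU' _]] := invU; right; exists (U' *m v).
  by apply: contraNneq v_neq0 => U'v0; rewrite -[v]mul1mx -UU' -mulmxA U'v0 mulmx0.
by rewrite mulmxA -(mulmxA M) UU' mulmx1.
Qed.

Lemma invertible_block_lower m n (c : 'M[D]_(n, m)) :
  invertible_over (block_mx 1%:M 0 c 1%:M).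
Proof.
exists (block_mx 1%:M 0 (- c) 1%:M).
rewrite !mulmx_block !(mulmx0, mul0mx, mulmx1, mul1mx, addr0, add0r, addrN, addNr).
by rewrite -!scalar_mx_block.
Qed.

Lemma invertible_block_upper m n (b : 'M[D]_(m, n)) :
  invertible_over (block_mx 1%:M b 0 1%:M).
Proof.
exists (block_mx 1%:M (- b) 0 1%:M).
rewrite !mulmx_block !(mulmx0, mul0mx, mulmx1, mul1mx, addr0, add0r, addrN, addNr).
by rewrite -!scalar_mx_block.
Qed.

Lemma invertible_or_kernel_block_diag m n (a : 'M[D]_m) (S : 'M[D]_n) :
  invertible_over a -> invertible_or_kernel S ->
  invertible_or_kernel (block_mx a 0 0 S).
Proof.
move=> [a' [aa' a'a]] [[S' [SS' S'S]] | [w w_neq0 Sw]].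
  left; exists (block_mx a' 0 0 S').
  rewrite !mulmx_block !(mulmx0, mul0mx, addr0, add0r) aa' a'a SS' S'S.
  by rewrite -!scalar_mx_block.
right; exists (col_mx 0 w).
  by apply: contraNneq w_neq0 => /(congr1 dsubmx); rewrite col_mxKd => ->; rewrite linear0.
by rewrite mul_block_col Sw !(mulmx0, mul0mx, addr0) col_mx0.
Qed.

Lemma block_mx_schur m n (a a' : 'M[D]_m) b c (d : 'M[D]_n) :
  a *m a' = 1%:M -> a' *m a = 1%:M ->
  block_mx a b c d = block_mx 1%:M 0 (c *m a') 1%:M *m
    block_mx a 0 0 (d - c *m a' *m b) *m block_mx 1%:M (a' *m b) 0 1%:M.
Proof.
move=> aa' a'a; rewrite !mulmx_block !(mulmx0, mul0mx, mulmx1, mul1mx, addr0, add0r).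
by rewrite -!mulmxA a'a mulmx1 mulmxA aa' mul1mx mulmxA addrC subrK.
Qed.
End InvertibleMatrix.

Section DivisionRing.
Variable D : unitRingType.
Hypothesis unit_neq0 : forall x : D, x != 0 -> x \is a GRing.unit.

Lemma invertible_or_kernel_pivot N (IH : forall S : 'M[D]_N, invertible_or_kernel S)
    (M : 'M[D]_(1 + N)) :
  M 0 0 != 0 -> invertible_or_kernel M.
Proof.
move=> piv; rewrite -[M]submxK; set a := ulsubmx M.
have a_scalar : a = (M 0 0)%:M.
  by rewrite [a]mx11_scalar !mxE (_ : lshift N 0 = 0) //; apply: val_inj.
pose a' : 'M[D]_1 := (M 0 0)^-1%:M.
have aa' : a *m a' = 1%:M by rewrite a_scalar -scalar_mxM mulrV ?unit_neq0.
have a'a : a' *m a = 1%:M by rewrite a_scalar -scalar_mxM mulVr ?unit_neq0.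
rewrite (block_mx_schur _ _ _ aa' a'a).
apply: invertible_or_kernel_mulr; first exact: invertible_block_upper.
apply: invertible_or_kernel_mull; first exact: invertible_block_lower.
by apply: invertible_or_kernel_block_diag; first by exists a'.
Qed.

Lemma divring_invertible_or_kernel N (M : 'M[D]_N) : invertible_or_kernel M.
Proof.
elim: N M => [|N IH] M; first by left; exists 0; split; apply/matrixP => -[].
have [i Mi0 | col0] := pickP (fun i => M i 0 != 0); last first.
  right; exists (delta_mx 0 0).
    by apply/eqP => /matrixP /(_ 0 0); rewrite !mxE eqxx; apply/eqP; rewrite oner_eq0.
  rewrite -colE; apply/matrixP => k l; rewrite !mxE.
  by apply/eqP; rewrite -[_ == _]negbK col0.
pose T : 'M[D]_N.+1 := tperm_mx 0 i.
have TT : T *m T = 1%:M by rewrite -perm_mxM tperm2 perm_mx1.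
rewrite -[M]mul1mx -TT -mulmxA.
apply: invertible_or_kernel_mull; first by exists T.
apply: (invertible_or_kernel_pivot IH).
by rewrite -xrowE /xrow /row_perm mxE tpermL.
Qed.

Lemma not_invertible_kernel N (M : 'M[D]_N) :
  ~ invertible_over M -> nontrivial_kernel M.
Proof. by case: (divring_invertible_or_kernel M). Qed.
End DivisionRing.

(** * Sylvester matrices *)

Section Sylvester.
Variable D : nzRingType.
Implicit Types p q A B : {poly D}.

Definition sylvester_deg m n p q : 'M[D]_(m + n) :=
  \matrix_(i, j)
    if (j < m)%N then
      (if (j <= i <= j + n)%N then p`_(i - j) else 0)
    else
      (if (j - m <= i <= j - m + m)%N then q`_(i - (j - m)) else 0).

Lemma sylvesterE p q : sylvester p q = sylvester_deg (size q).-1 (size p).-1 p q.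
Proof. by []. Qed.

Lemma band_coefE p n i j : (size p <= n.+1)%N ->
  (if (j <= i <= j + n)%N then p`_(i - j) else 0) = (p * 'X^j)`_i.
Proof.
move=> sp; rewrite coefMXn; case: leqP => //= ji; case: leqP => // lt_jn_i.
by rewrite nth_default // (leq_trans sp) // ltn_subRL.
Qed.

Lemma rVpoly_sum d (u : 'rV[D]_d) : rVpoly u = \sum_(k < d) u 0 k *: 'X^k.
Proof. by rewrite /rVpoly poly_def; apply: eq_bigr => k _; rewrite valK. Qed.

Lemma coef_mul_scaleXn p c j i : (p * (c *: 'X^j))`_i = (p * 'X^j)`_i * c.
Proof. by rewrite -mul_polyC (commr_polyXn c%:P) mulrA coefMC. Qed.

Lemma mul_sylvester_col m n p q (a : 'cV[D]_m) (b : 'cV[D]_n) :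
  (size p <= n.+1)%N -> (size q <= m.+1)%N ->
  sylvester_deg m n p q *m col_mx a b
    = (poly_rV (p * rVpoly a^T + q * rVpoly b^T))^T.
Proof.
move=> sp sq; apply/colP => i; rewrite !mxE big_split_ord coefD !rVpoly_sum.
rewrite !mulr_sumr !coef_sum; congr (_ + _); apply: eq_bigr => j _.
  by rewrite col_mxEu !mxE /= ltn_ord band_coefE // coef_mul_scaleXn.
by rewrite col_mxEd !mxE /= ltnNge leq_addr addKn band_coefE // coef_mul_scaleXn.
Qed.

Lemma size_sylvester_comb m n p q A B :
  (size p <= n.+1)%N -> (size q <= m.+1)%N -> (size A <= m)%N -> (size B <= n)%N ->
  (size (p * A + q * B)%R <= m + n)%N.
Proof.
move=> sp sq sA sB; rewrite (leq_trans (size_polyD _ _)) // geq_max.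
have := size_polyMleq p A; have := size_polyMleq q B; lia.
Qed.

Lemma sylvester_kernelP m n p q :
  (size p <= n.+1)%N -> (size q <= m.+1)%N ->
  nontrivial_kernel (sylvester_deg m n p q) <->
  exists A B, [/\ (size A <= m)%N, (size B <= n)%N, (A != 0) || (B != 0)
                & p * A + q * B = 0].
Proof.
move=> sp sq; split.
  case=> v v_neq0; rewrite -[v]vsubmxK mul_sylvester_col // => /(congr1 trmx).
  rewrite trmxK trmx0 => /(congr1 rVpoly); rewrite linear0 poly_rV_K; last first.
    by rewrite size_sylvester_comb ?size_poly.
  move=> comb0; exists (rVpoly (usubmx v)^T), (rVpoly (dsubmx v)^T).
  split; rewrite ?size_poly //; apply: contraNT v_neq0.
  rewrite negb_or !negbK => /andP[/eqP a0 /eqP b0].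
  rewrite -[v]vsubmxK -[usubmx v]trmxK -[dsubmx v]trmxK.
  by rewrite -[(usubmx v)^T]rVpolyK -[(dsubmx v)^T]rVpolyK a0 b0 !linear0 col_mx0.
case=> A [B [sA sB AB_neq0 AB0]]; exists (col_mx (poly_rV A)^T (poly_rV B)^T).
  apply: contraTneq AB_neq0 => /eqP; rewrite col_mx_eq0 !trmx_eq0.
  move=> /andP[/eqP A0 /eqP B0].
  by rewrite -(poly_rV_K sA) -(poly_rV_K sB) A0 B0 !linear0 eqxx.
by rewrite mul_sylvester_col // !trmxK !poly_rV_K // AB0 linear0 trmx0.
Qed.
End Sylvester.

Section QuatSylvester.
Variable K : idomainType.
Hypotheses (anK : anisotropic K) (two_neq0 : 2%:R != 0 :> K).
Local Notation pconj := (map_poly (@qconj K)).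

Lemma sylvester_kernel_symmetrization m n m' n' (p q : {poly quat K}) :
  (size p <= n.+1)%N -> (size q <= m.+1)%N ->
  (size (p * pconj p)%R <= n'.+1)%N -> (size (q * pconj q)%R <= m'.+1)%N ->
  ((m + m).-1 <= m')%N -> ((n + n).-1 <= n')%N ->
  nontrivial_kernel (sylvester_deg m n p q) ->
  nontrivial_kernel (sylvester_deg m' n' (p * pconj p) (q * pconj q)).
Proof.
move=> sp sq sps sqs le_m' le_n' /(sylvester_kernelP sp sq).
case=> A [B [sA sB AB_neq0 AB0]]; apply/(sylvester_kernelP sps sqs).
have qconj_aniso (x : quat K) : x * qconj x = 0 -> x = 0 by exact: mul_qconj_eq0.
have symm_neq0 (C : {poly quat K}) : C != 0 -> C * pconj C != 0.
  by apply: contra_neq; apply: (mul_map_conj_eq0 (raddf0 _) qconj_aniso).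
have size_symm (C : {poly quat K}) : size (C * pconj C) = (size C + size C).-1.
  exact: (size_mul_map_conj (raddf0 _) qconj_aniso).
exists (A * pconj A), (- (B * pconj B)); split.
- by rewrite size_symm (leq_trans _ le_m') // -!subn1 leq_sub2r ?leq_add.
- by rewrite size_polyN size_symm (leq_trans _ le_n') // -!subn1 leq_sub2r ?leq_add.
- by apply/orP; case/orP: AB_neq0 => /symm_neq0 ?; [left | right; rewrite oppr_eq0].
- exact: relation_symmetrization.
Qed.
End QuatSylvester.

Lemma map_sylvester_deg (D1 D2 : nzRingType) (f : D1 -> D2) m n p q :
  f 0 = 0 ->
  map_mx f (sylvester_deg m n p q) = sylvester_deg m n (map_poly f p) (map_poly f q).
Proof.
move=> f0; apply/matrixP => i j; rewrite !mxE.
by case: ifP => _; case: ifP => _; rewrite ?coef_map_id0.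
Qed.

(** * Polynomials in two quaternionic variables *)

Lemma polyP2 (D : nzRingType) (X Y : {poly {poly D}}) :
  (forall i j, X`_i`_j = Y`_i`_j) -> X = Y.
Proof. by move=> XY; apply/polyP => i; apply/polyP => j; apply: XY. Qed.

Section Swap.
Variable R : realType.
Implicit Types P Q : Hpoly2 R.

Lemma coef_swap12 P i j : (swap12 P)`_i`_j = P`_j`_i.
Proof.
rewrite /swap12 coef_poly; case: ltnP => lt_i.
  by rewrite coef_poly; case: ltnP => // le_P_j; rewrite (nth_default _ le_P_j) coef0.
case: (ltnP j (size P)) => lt_j; last by rewrite (nth_default _ lt_j) !coef0.
rewrite coef0 nth_default // (leq_trans _ lt_i) //.
exact: (@leq_bigmax _ (fun k : 'I_(size P) => size P`_k) (Ordinal lt_j)).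
Qed.

Lemma swap12M P Q : swap12 (P * Q) = swap12 P * swap12 Q.
Proof.
apply: polyP2 => i j; rewrite coef_swap12 !coefM !coef_sum.
under eq_bigr do rewrite coefM.
under [RHS]eq_bigr do rewrite coefM.
rewrite exchange_big /=; apply: eq_bigr => a _; apply: eq_bigr => b _.
by rewrite !coef_swap12.
Qed.

Lemma swap12_conj P : swap12 (reg_conj P) = reg_conj (swap12 P).
Proof.
apply: polyP2 => i j; rewrite /reg_conj coef_swap12 !coef_map_id0 ?map_poly0 ?raddf0 //.
by rewrite coef_swap12.
Qed.

Lemma swap12_symmetrization P :
  swap12 (symmetrization P) = symmetrization (swap12 P).
Proof. by rewrite /symmetrization swap12M swap12_conj. Qed.
End Swap.

Section QuatSplit.
Variable K : comNzRingType.
Implicit Types p q : {poly quat K}.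

Definition qsplit p : quat {poly K} :=
  Quat (map_poly (@qr K) p) (map_poly (@qi K) p)
       (map_poly (@qj K) p) (map_poly (@qk K) p).

Lemma qsplit1 : qsplit 1 = 1.
Proof. by apply: quat_ext; rewrite /= -polyC1 map_polyC. Qed.

Lemma qsplitM p q : qsplit (p * q) = qsplit p * qsplit q.
Proof.
apply: quat_ext => /=; apply/polyP => i;
  rewrite !(coefD, coefN, coefM, coef_map) /= raddf_sum;
  do 3 rewrite -?big_split -?sumrB /=;
  by apply: eq_bigr => j _; rewrite !coef_map.
Qed.

Lemma qsplit_conj p : qsplit (map_poly (@qconj K) p) = qconj (qsplit p).
Proof. by apply: quat_ext => /=; apply/polyP => i; rewrite ?coefN !coef_map. Qed.
End QuatSplit.

Lemma size_map_poly_le (D1 D2 : nzRingType) (f : D1 -> D2) (p : {poly D1}) :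
  (size (map_poly f p) <= size p)%N.
Proof. exact: size_poly. Qed.

Section Embedding.
Variable R : realType.

Lemma embLE (p : Hpoly R) : embL p = qmap (@tofrac _) (qsplit p).
Proof. by []. Qed.

Lemma embL_is_zmod_morphism : zmod_morphism (@embL R).
Proof. by move=> p q; rewrite /embL !raddfB. Qed.

Lemma embL_is_monoid_morphism : monoid_morphism (@embL R).
Proof.
split=> [|p q]; rewrite !embLE ?qsplitM ?qmapM // qsplit1.
by apply: quat_ext; rewrite /= ?rmorph1 ?rmorph0.
Qed.
End Embedding.

HB.instance Definition _ (R : realType) :=
  GRing.isZmodMorphism.Build (Hpoly R) (Lfield R) (@embL R) (@embL_is_zmod_morphism R).
HB.instance Definition _ (R : realType) :=
  GRing.isMonoidMorphism.Build (Hpoly R) (Lfield R) (@embL R) (@embL_is_monoid_morphism R).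

Section Resultant.
Variable R : realType.
Local Notation K := {fraction {poly R}}.
Local Notation embL2 := (map_poly (@embL R)).
Implicit Types P Q : Hpoly2 R.

Lemma anisotropic_ratfun : anisotropic K.
Proof. exact/anisotropic_frac/anisotropic_poly. Qed.

Lemma ratfun_two_neq0 : 2%:R != 0 :> K.
Proof. by rewrite -(rmorph_nat (@tofrac _)) tofrac_eq0 -polyC_natr polyC_eq0 pnatr_eq0. Qed.

Lemma size_symmetrization P : size (symmetrization P) = (size P + size P).-1.
Proof.
apply: size_mul_map_conj; first exact: map_poly0.
apply: mul_map_conj_eq0; first exact: raddf0.
by move=> x; apply: mul_qconj_eq0; apply: anisotropic_real.
Qed.

Lemma embL_symmetrization P :
  embL2 (symmetrization P) = embL2 P * map_poly (@qconj K) (embL2 P).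
Proof.
rewrite rmorphM; congr (_ * _); apply/polyP => i.
by rewrite !coef_map /= !embLE qsplit_conj qmap_conj.
Qed.

Lemma Lfield_unit (x : Lfield R) : x != 0 -> x \is a GRing.unit.
Proof. exact: anisotropic_qunit anisotropic_ratfun. Qed.

Lemma res_q1_zero_symmetrization P Q :
  res_q1_zero P Q -> res_q1_zero (symmetrization P) (symmetrization Q).
Proof.
have size_embL2 S : (size (embL2 S) <= (size S).-1.+1)%N.
  by rewrite (leq_trans (size_map_poly_le _ _)) // leqSpred.
have [sPs sQs] := (size_embL2 (symmetrization P), size_embL2 (symmetrization Q)).
rewrite !embL_symmetrization in sPs sQs.
rewrite /res_q1_zero /Dieudonne_det_zero !sylvesterE !map_sylvester_deg ?rmorph0 //.
rewrite !embL_symmetrization => /(not_invertible_kernel Lfield_unit) ker.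
apply: kernel_not_invertible; apply: (sylvester_kernel_symmetrization
  anisotropic_ratfun ratfun_two_neq0 (size_embL2 P) (size_embL2 Q) sPs sQs _ _ ker).
(* [size Q] occurs with two convertible but syntactically different ring
   structures, which [lia] would take for distinct atoms. *)
- by rewrite size_symmetrization; move: (size Q) => s; lia.
- by rewrite size_symmetrization; move: (size P) => s; lia.
Qed.
End Resultant.

Theorem proposition4p8 (R : realType) (P Q : Hpoly2 R) :
  (res_q1_zero P Q -> res_q1_zero (symmetrization P) (symmetrization Q)) /\
  (res_q2_zero P Q -> res_q2_zero (symmetrization P) (symmetrization Q)).
Proof.
split; first exact: res_q1_zero_symmetrization.
by rewrite /res_q2_zero !swap12_symmetrization; exact: res_q1_zero_symmetrization.
Qed.
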